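(* Let $f(x_1,x_2)=(-2+x_1+x_2)^2$ and $g(x_1,x_2)=1-x_1^2-x_2^2$. Although $f>0$ on $\{x\in\mathbb{R}^2: g(x)\geqslant 0\}$, there do not exist SDSOS polynomials $\sigma_0,\sigma_1$ (of any degree) such that $f=\sigma_0+\sigma_1 g$. Consequently there also do not exist DSOS polynomials $\sigma_0,\sigma_1$ with $f=\sigma_0+\sigma_1 g$.
   Context: For $\alpha\in\mathbb{N}^2$ write $x^\alpha=x_1^{\alpha_1}x_2^{\alpha_2}$. A polynomial is SDSOS (scaled diagonally-dominant sum of squares) if it is of the form $\sum_k (p_k x^{\alpha(k)}+q_k x^{\beta(k)})^2$ (finite sum) with $p_k,q_k\in\mathbb{R}$ and $\alpha(k),\beta(k)\in\mathbb{N}^2$. A polynomial is DSOS (diagonally-dominant sum of squares) if it is a finite nonnegative combination of polynomials of the forms $(x^\alpha)^2$, $(x^\alpha+x^\beta)^2$, $(x^\alpha-x^\beta)^2$ with $\alpha,\beta\in\mathbb{N}^2$; every DSOS polynomial is SDSOS. *)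

From HB Require Import structures.
From mathcomp Require Import all_boot all_algebra.
From mathcomp Require Import reals.
From mathcomp Require Import mpoly.
Set Implicit Arguments. Unset Strict Implicit. Unset Printing Implicit Defensive.
Import GRing.Theory Num.Theory.
Local Open Scope ring_scope.

Section Defs.
Variable R : realType.

Definition SDSOS (s : {mpoly R[2]}) : Prop :=
  exists l : seq (R * R * 'X_{1..2} * 'X_{1..2}),
    s = \sum_(t <- l) (t.1.1.1 *: 'X_[t.1.2] + t.1.1.2 *: 'X_[t.2]) ^+ 2.

Definition DSOS (s : {mpoly R[2]}) : Prop :=
  exists (l1 : seq (R * 'X_{1..2}))
         (l2 l3 : seq (R * 'X_{1..2} * 'X_{1..2})),
    (forall t, t \in l1 -> 0 <= t.1) /\
    (forall t, t \in l2 -> 0 <= t.1.1) /\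
    (forall t, t \in l3 -> 0 <= t.1.1) /\
    s = \sum_(t <- l1) t.1 *: ('X_[t.2]) ^+ 2
      + \sum_(t <- l2) t.1.1 *: ('X_[t.1.2] + 'X_[t.2]) ^+ 2
      + \sum_(t <- l3) t.1.1 *: ('X_[t.1.2] - 'X_[t.2]) ^+ 2.

(* f(x1,x2) = (-2 + x1 + x2)^2 ; g(x1,x2) = 1 - x1^2 - x2^2.
   Variable x1 is 'X_0, x2 is 'X_1. *)
Definition fpoly : {mpoly R[2]} := (- 2%:MP + 'X_0 + 'X_1) ^+ 2.
Definition gpoly : {mpoly R[2]} := 1 - 'X_0 ^+ 2 - 'X_1 ^+ 2.

End Defs.

(** The linear functional
      L(s) = s(u,v) + s(-u,v) + s(u,-v) - s(-u,-v)
    is nonnegative on every square of a binomial: at the four corners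
    (+-u,+-v) a monomial only changes sign, and the weights 1,1,1,-1 make the
    cross term of (P x^a + Q x^b)^2 either double or cancel, leaving
    L = 2 (P +- Q)^2.  Hence L >= 0 on SDSOS polynomials.  Since g takes the
    constant value 1 - u^2 - v^2 at the four corners, any certificate
    f = s0 + s1 g with s0, s1 SDSOS would give L(f) >= 0 whenever
    u^2 + v^2 <= 1; but L(f) = 2(u-v)^2 + 8 - 8(u+v) < 0 for u = v = 3/5. *)
From HB Require Import structures.
From mathcomp Require Import all_boot all_algebra.
From mathcomp Require Import reals.
From mathcomp Require Import mpoly.
From mathcomp Require Import ring lra.
Set Implicit Arguments. Unset Strict Implicit. Unset Printing Implicit Defensive.
Import GRing.Theory Num.Theory.
Local Open Scope ring_scope.

Section DSOS_SDSOS.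
Variable R : realType.

Lemma SDSOSD (s t : {mpoly R[2]}) : SDSOS s -> SDSOS t -> SDSOS (s + t).
Proof. by move=> [ls ->] [lt ->]; exists (ls ++ lt); rewrite big_cat. Qed.

Lemma SDSOS_nonneg_comb (T : eqType) (l : seq T) (c p q : T -> R)
    (a b : T -> 'X_{1..2}) :
  (forall t, t \in l -> 0 <= c t) ->
  SDSOS (\sum_(t <- l) c t *: (p t *: 'X_[a t] + q t *: 'X_[b t]) ^+ 2).
Proof.
move=> c_ge0.
exists [seq (Num.sqrt (c t) * p t, Num.sqrt (c t) * q t, a t, b t) | t <- l].
rewrite big_map; apply: eq_big_seq => t /c_ge0 ct /=.
by rewrite -{1}(sqr_sqrtr ct) -exprZn scalerDr !scalerA.
Qed.

Lemma DSOS_SDSOS (s : {mpoly R[2]}) : DSOS s -> SDSOS s.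
Proof.
move=> [l1 [l2 [l3 [ge0_1 [ge0_2 [ge0_3 ->]]]]]].
apply: SDSOSD; first apply: SDSOSD.
- have -> : \sum_(t <- l1) t.1 *: 'X_[t.2] ^+ 2
      = \sum_(t <- l1) t.1 *: (1 *: 'X_[t.2] + 0 *: 'X_[t.2]) ^+ 2 :> {mpoly R[2]}.
    by apply: eq_bigr => t _; rewrite scale1r scale0r addr0.
  exact: SDSOS_nonneg_comb.
- have -> : \sum_(t <- l2) t.1.1 *: ('X_[t.1.2] + 'X_[t.2]) ^+ 2
      = \sum_(t <- l2) t.1.1 *: (1 *: 'X_[t.1.2] + 1 *: 'X_[t.2]) ^+ 2
      :> {mpoly R[2]}.
    by apply: eq_bigr => t _; rewrite !scale1r.
  exact: SDSOS_nonneg_comb.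
- have -> : \sum_(t <- l3) t.1.1 *: ('X_[t.1.2] - 'X_[t.2]) ^+ 2
      = \sum_(t <- l3) t.1.1 *: (1 *: 'X_[t.1.2] + (-1) *: 'X_[t.2]) ^+ 2
      :> {mpoly R[2]}.
    by apply: eq_bigr => t _; rewrite scale1r scaleN1r.
  exact: SDSOS_nonneg_comb.
Qed.

End DSOS_SDSOS.

Section CornerSum.
Variable R : realType.
Implicit Types (u v : R) (s t : {mpoly R[2]}).

Definition pt u v : 'I_2 -> R := fun i => if i == ord0 then u else v.

Lemma meval_pt_X u v (m : 'X_{1..2}) :
  ('X_[m] : {mpoly R[2]}).@[pt u v] = u ^+ m ord0 * v ^+ m ord_max.
Proof.
rewrite mevalX big_ord_recr big_ord1 /=.
by have -> : widen_ord (leqnSn 1) ord0 = ord0 :> 'I_2 by apply/val_inj.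
Qed.

Definition corner_sum u v s : R :=
  s.@[pt u v] + s.@[pt (- u) v] + s.@[pt u (- v)] - s.@[pt (- u) (- v)].

Lemma corner_sum0 u v : corner_sum u v 0 = 0.
Proof. by rewrite /corner_sum !meval0 !addr0 subr0. Qed.

Lemma corner_sumD u v : {morph corner_sum u v : s t / s + t}.
Proof. by move=> s t; rewrite /corner_sum !mevalD; ring. Qed.

Lemma corner_sum_sum u v (T : Type) (l : seq T) (F : T -> {mpoly R[2]}) :
  corner_sum u v (\sum_(t <- l) F t) = \sum_(t <- l) corner_sum u v (F t).
Proof. exact: (big_morph _ (corner_sumD u v) (corner_sum0 u v)). Qed.

Lemma corner_sum_binomial_sq_ge0 u v (p q : R) (a b : 'X_{1..2}) :
  0 <= corner_sum u v ((p *: 'X_[a] + q *: 'X_[b]) ^+ 2).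
Proof.
rewrite /corner_sum !expr2 !mevalM !mevalD !mevalZ !meval_pt_X !(exprNn u) !(exprNn v).
move: (u ^+ a ord0) (v ^+ a ord_max) (u ^+ b ord0) (v ^+ b ord_max) => x0 x1 y0 y1.
have sgnP n : (-1) ^+ n = 1 :> R \/ (-1) ^+ n = -1 :> R.
  by rewrite -signr_odd; case: odd; [right; rewrite expr1 | left].
have [->|->] := sgnP (a ord0); have [->|->] := sgnP (a ord_max);
have [->|->] := sgnP (b ord0); have [->|->] := sgnP (b ord_max);
  have := sqr_ge0 (p * (x0 * x1) + q * (y0 * y1));
  have := sqr_ge0 (p * (x0 * x1) - q * (y0 * y1)); lra.
Qed.

Lemma SDSOS_corner_sum_ge0 u v s : SDSOS s -> 0 <= corner_sum u v s.
Proof.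
move=> [l ->]; rewrite corner_sum_sum; apply: sumr_ge0 => t _.
exact: corner_sum_binomial_sq_ge0.
Qed.

Lemma meval_fpoly (x : 'I_2 -> R) : (fpoly R).@[x] = (-2 + x 0 + x 1) ^+ 2.
Proof. by rewrite /fpoly !expr2 mevalM !mevalD mevalN mevalC !mevalXU. Qed.

Lemma meval_gpoly (x : 'I_2 -> R) : (gpoly R).@[x] = 1 - x 0 ^+ 2 - x 1 ^+ 2.
Proof. by rewrite /gpoly !expr2 !mevalB !mevalM meval1 !mevalXU. Qed.

Lemma corner_sum_fpoly u v :
  corner_sum u v (fpoly R) = 2 * (u - v) ^+ 2 + 8 - 8 * (u + v).
Proof. by rewrite /corner_sum !meval_fpoly /pt /=; ring. Qed.

Lemma corner_sum_mul_gpoly u v s :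
  corner_sum u v (s * gpoly R) = (1 - u ^+ 2 - v ^+ 2) * corner_sum u v s.
Proof. by rewrite /corner_sum !mevalM !meval_gpoly /pt /= !sqrrN; ring. Qed.

Lemma SDSOS_certificate_corner_sum_ge0 u v s0 s1 :
  u ^+ 2 + v ^+ 2 <= 1 -> SDSOS s0 -> SDSOS s1 ->
  fpoly R = s0 + s1 * gpoly R -> 0 <= corner_sum u v (fpoly R).
Proof.
move=> disk sd0 sd1 ->; rewrite corner_sumD corner_sum_mul_gpoly.
apply: addr_ge0; first exact: SDSOS_corner_sum_ge0.
by apply: mulr_ge0; [lra | exact: SDSOS_corner_sum_ge0].
Qed.

End CornerSum.

Lemma fpoly_gt0_on_disk (R : realType) (x : 'I_2 -> R) :
  0 <= (gpoly R).@[x] -> 0 < (fpoly R).@[x].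
Proof.
rewrite meval_fpoly meval_gpoly => disk.
rewrite lt0r sqr_ge0 andbT sqrf_eq0; apply/eqP => line.
by have := sqr_ge0 (x 0 - x 1); nra.
Qed.

Theorem mainTheorem3 (R : realType) :
  (forall x : 'I_2 -> R, 0 <= (gpoly R).@[x] -> 0 < (fpoly R).@[x]) /\
  ~ (exists s0 s1 : {mpoly R[2]},
       SDSOS s0 /\ SDSOS s1 /\ fpoly R = s0 + s1 * gpoly R) /\
  ~ (exists s0 s1 : {mpoly R[2]},
       DSOS s0 /\ DSOS s1 /\ fpoly R = s0 + s1 * gpoly R).
Proof.
have no_SDSOS_certificate :
    ~ (exists s0 s1 : {mpoly R[2]},
         SDSOS s0 /\ SDSOS s1 /\ fpoly R = s0 + s1 * gpoly R).
  move=> [s0 [s1 [sd0 [sd1 cert]]]].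
  have disk : (3 / 5) ^+ 2 + (3 / 5) ^+ 2 <= 1 :> R by lra.
  have := SDSOS_certificate_corner_sum_ge0 disk sd0 sd1 cert.
  by rewrite corner_sum_fpoly; lra.
split; [exact: fpoly_gt0_on_disk | split => //].
move=> [s0 [s1 [d0 [d1 cert]]]]; apply: no_SDSOS_certificate.
by exists s0, s1; split; [exact: DSOS_SDSOS | split; first exact: DSOS_SDSOS].
Qed.
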